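(* Let $n,m\ge1$, $r>0$, let $\varphi_1,\dots,\varphi_n:\mathbb{R}\to[0,\infty)$ be nonnegative functions and $x_1,\dots,x_m\in\mathbb{R}$ such that for each $j$ there is $i$ with $\varphi_i(x_j)>0$. Define sequences as follows. Set $v^1_i=\sqrt{r/n}$ for $i=1,\dots,n$. For $k\ge1$, given $v^k\in[0,\infty)^n$, let $u^k\in[0,\infty)^n$ with $\sum_i(u^k_i)^2=r$ be a point at which $$\widehat l^{\,k}(u)=\prod_{j=1}^m\Big(\sum_{i=1}^n u_i v^k_i\varphi_i(x_j)\Big)$$ attains its maximum over the sphere $\{u\in\mathbb{R}^n:\sum_iu_i^2=r\}$; then let $\overline\theta^{k+1}>0$ be defined by $(\overline\theta^{k+1})^2\sum_{i=1}^n u^k_iv^k_i=r$ and set $v^{k+1}_i=\overline\theta^{k+1}\sqrt{u^k_iv^k_i}$, so that $\sum_i(v^{k+1}_i)^2=r$. Then $\lim_{k\to\infty}\overline\theta^k=1$.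
   Context: This is the outer iteration (''steps (i)–(iii)'') for maximizing the likelihood $\prod_j\sum_i u_iv_i\varphi_i(x_j)$ subject to $\sum u_i^2=\sum v_i^2=r$, where step (ii) computes the maximizer $u^k$ with $v^k$ fixed. *)

From HB Require Import structures.
From mathcomp Require Import all_boot all_order all_algebra.
From mathcomp Require Import all_classical all_reals all_analysis.
Set Implicit Arguments. Unset Strict Implicit. Unset Printing Implicit Defensive.
Import Order.TTheory GRing.Theory Num.Theory.
Local Open Scope ring_scope.

Definition lhat (R : realType) (n m : nat) (phi : 'I_n -> R -> R)
  (x : 'I_m -> R) (v u : 'I_n -> R) : R :=
  \prod_(j < m) \sum_(i < n) u i * v i * phi i (x j).

Definition is_sphere_maximizer (R : realType) (n m : nat) (phi : 'I_n -> R -> R)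
  (x : 'I_m -> R) (r : R) (v u : 'I_n -> R) : Prop :=
  \sum_(i < n) u i ^+ 2 = r /\
  forall w : 'I_n -> R, \sum_(i < n) w i ^+ 2 = r ->
    lhat phi x v w <= lhat phi x v u.

From HB Require Import structures.
From mathcomp Require Import all_boot all_order all_algebra.
From mathcomp Require Import all_classical all_reals all_analysis.
From mathcomp Require Import ring lra.
Set Implicit Arguments. Unset Strict Implicit. Unset Printing Implicit Defensive.
Import Order.TTheory GRing.Theory Num.Theory.
Import numFieldNormedType.Exports.
Local Open Scope classical_set_scope.
Local Open Scope ring_scope.

(* Since u^k and v^k lie on the same sphere, sum_i u_i v_i <= r, so every
   normalizer satisfies theta^k >= 1.  The likelihood L^k = lhat(v^k, v^k)
   satisfies L^{k+1} = (theta^{k+1})^{2m} lhat(v^k, u^k) >= (theta^{k+1})^{2m} L^k,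
   because u^k maximizes lhat(v^k, .) on the sphere.  Hence L^k is
   nondecreasing, positive and bounded, so L^{k+1} / L^k -> 1, and this ratio
   squeezes theta^{k+1} towards 1. *)

Lemma sqr_mul_sqrt (R : rcfType) (t a : R) :
  0 <= a -> (t * Num.sqrt a) ^+ 2 = t ^+ 2 * a.
Proof. by move=> a_ge0; rewrite exprMn sqr_sqrtr. Qed.

Lemma sum_sqr_uniform (R : rcfType) (n : nat) (r : R) :
  (0 < n)%N -> 0 <= r -> \sum_(i < n) Num.sqrt (r / n%:R) ^+ 2 = r.
Proof.
move=> n_gt0 r_ge0; rewrite sqr_sqrtr ?divr_ge0 ?ler0n //.
by rewrite sumr_const card_ord -[_ *+ n]mulr_natr divfK // pnatr_eq0 -lt0n.
Qed.

Lemma sum_mul_le_of_sphere (R : realFieldType) (I : finType) (r : R)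
    (a b : I -> R) :
  \sum_i a i ^+ 2 = r -> \sum_i b i ^+ 2 = r -> \sum_i a i * b i <= r.
Proof.
move=> a_sph b_sph.
have -> : r = \sum_i (a i ^+ 2 + b i ^+ 2) / 2.
  by rewrite -mulr_suml big_split /= a_sph b_sph; field.
apply: ler_sum => i _; have := sqr_ge0 (a i - b i); lra.
Qed.

Lemma normalizer_ge1 (R : realFieldType) (t s r : R) :
  0 < t -> 0 < r -> s <= r -> t ^+ 2 * s = r -> 1 <= t.
Proof.
move=> t_gt0 r_gt0 s_le_r norm_t.
have t2_gt0 : 0 < t ^+ 2 by rewrite exprn_gt0.
have s_gt0 : 0 < s by rewrite -(pmulr_rgt0 s t2_gt0) norm_t.
have : 1 <= t ^+ 2 by rewrite -(ler_pM2r s_gt0) mul1r norm_t.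
by rewrite -(@expr_ge1 _ 2 t) ?(ltW t_gt0).
Qed.

Section Likelihood.
Variables (R : realType) (n m : nat) (phi : 'I_n -> R -> R) (x : 'I_m -> R).
Hypothesis phi_ge0 : forall i t, 0 <= phi i t.

Lemma lhat_ge0 (v u : 'I_n -> R) :
  (forall i, 0 <= u i * v i) -> 0 <= lhat phi x v u.
Proof.
by move=> uv_ge0; apply: prodr_ge0 => j _; apply: sumr_ge0 => i _;
  rewrite mulr_ge0.
Qed.

Lemma lhat_gt0 (v u : 'I_n -> R) :
  (forall j, exists i, 0 < phi i (x j)) ->
  (forall i, 0 < u i * v i) -> 0 < lhat phi x v u.
Proof.
move=> phi_cover uv_gt0; apply: prodr_gt0 => j _.
have [i0 phi_i0] := phi_cover j.
rewrite (bigD1 i0) //= ltr_pwDl ?(mulr_gt0 (uv_gt0 i0) phi_i0) //.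
by apply: sumr_ge0 => i _; rewrite mulr_ge0 ?(ltW (uv_gt0 i)).
Qed.

Lemma lhat_diag_le (w : 'I_n -> R) (r : R) :
  \sum_i w i ^+ 2 = r ->
  lhat phi x w w <= \prod_(j < m) (r * \sum_(i < n) phi i (x j)).
Proof.
move=> w_sph; apply: ler_prod => j _; apply/andP; split.
  by apply: sumr_ge0 => i _; rewrite -expr2 mulr_ge0 ?sqr_ge0.
rewrite -w_sph mulr_suml; apply: ler_sum => i _.
rewrite -expr2; apply: ler_wpM2l; first exact: sqr_ge0.
rewrite (bigD1 i) //= lerDl.
by apply: sumr_ge0.
Qed.

Lemma lhat_sqrt_scale (a b w : 'I_n -> R) (t : R) :
  (forall i, 0 <= a i * b i) ->
  (forall i, w i = t * Num.sqrt (a i * b i)) ->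
  lhat phi x w w = (t ^+ 2) ^+ m * lhat phi x b a.
Proof.
move=> ab_ge0 w_def; rewrite /lhat -[in X in _ ^+ X](card_ord m) -prodrMl.
apply: eq_bigr => j _; rewrite mulr_sumr; apply: eq_bigr => i _.
by rewrite -expr2 w_def sqr_mul_sqrt // !mulrA.
Qed.

End Likelihood.

Lemma cvgn_ratio_succ (R : realType) (L : R ^nat) :
  nondecreasing_seq L -> has_ubound (range L) -> 0 < L 0%N ->
  L k.+1 / L k @[k --> \oo] --> (1 : R).
Proof.
move=> L_incr L_bnd L0_gt0.
have L_cvg := nondecreasing_cvgn L_incr L_bnd.
have lim_gt0 : 0 < sup (range L).
  by apply: lt_le_trans L0_gt0 _; apply: ub_le_sup => //; exists 0%N.
have L_cvgS : L k.+1 @[k --> \oo] --> sup (range L).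
  by move: L_cvg; rewrite -cvg_shiftS.
have := cvgM L_cvgS (cvgV (lt0r_neq0 lim_gt0) L_cvg).
by rewrite mulfV ?lt0r_neq0 //; apply.
Qed.

Theorem lemma6 (R : realType) (n m : nat) (r : R)
  (phi : 'I_n -> R -> R) (x : 'I_m -> R)
  (u v : nat -> 'I_n -> R) (theta : nat -> R) :
  (0 < n)%N -> (0 < m)%N -> 0 < r ->
  (forall i t, 0 <= phi i t) ->
  (forall j : 'I_m, exists i : 'I_n, 0 < phi i (x j)) ->
  (forall i, v 0%N i = Num.sqrt (r / n%:R)) ->
  (forall k i, 0 <= u k i) ->
  (forall k, is_sphere_maximizer phi x r (v k) (u k)) ->
  (forall k, 0 < theta k) ->
  (forall k, theta k ^+ 2 * (\sum_(i < n) u k i * v k i) = r) ->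
  (forall k i, v k.+1 i = theta k * Num.sqrt (u k i * v k i)) ->
  (theta k @[k --> \oo] --> (1 : R)).
Proof.
move=> n_gt0 m_gt0 r_gt0 phi_ge0 phi_cover v0 u_ge0 u_max theta_gt0 theta_norm vS.
have rn_gt0 : 0 < r / n%:R by rewrite divr_gt0 ?ltr0n.
have v_ge0 k i : 0 <= v k i.
  by case: k => [|k]; rewrite ?v0 ?vS ?mulr_ge0 ?sqrtr_ge0 ?ltW.
have uv_ge0 k i : 0 <= u k i * v k i by rewrite mulr_ge0.
have v_sph k : \sum_i v k i ^+ 2 = r.
  case: k => [|k]; last first.
    by rewrite -(theta_norm k) mulr_sumr; apply: eq_bigr => i _;
      rewrite vS sqr_mul_sqrt.
  under eq_bigr => i _ do rewrite v0.
  exact: sum_sqr_uniform (ltW r_gt0).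
have theta_ge1 k : 1 <= theta k.
  apply: normalizer_ge1 (theta_gt0 k) r_gt0 _ (theta_norm k).
  exact: sum_mul_le_of_sphere (proj1 (u_max k)) (v_sph k).
pose L k := lhat phi x (v k) (v k).
have L_ge0 k : 0 <= L k by apply: lhat_ge0 => // i; rewrite -expr2 sqr_ge0.
have L_step k : (theta k ^+ 2) ^+ m * L k <= L k.+1.
  rewrite /L (lhat_sqrt_scale phi x (uv_ge0 k) (vS k)).
  rewrite ler_wpM2l ?exprn_ge0 ?(ltW (theta_gt0 k)) //.
  exact: (proj2 (u_max k)) (v_sph k).
have L_incr : nondecreasing_seq L.
  apply/nondecreasing_seqP => k; apply: le_trans (L_step k).
  by rewrite ler_peMl //; apply/exprn_ege1/exprn_ege1/theta_ge1.
have L0_gt0 : 0 < L 0%N.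
  by apply: lhat_gt0 => // i; rewrite v0 -expr2 sqr_sqrtr ?ltW.
have L_bnd : has_ubound (range L).
  by exists (\prod_(j < m) (r * \sum_(i < n) phi i (x j))) => _ [k _ <-];
    exact: lhat_diag_le.
apply: (squeeze_cvgr _ (cvg_cst (1 : R)) (cvgn_ratio_succ L_incr L_bnd L0_gt0)).
near=> k; rewrite theta_ge1 /=.
have Lk_gt0 : 0 < L k by apply: lt_le_trans L0_gt0 (L_incr _ _ _).
rewrite ler_pdivlMr //; apply: le_trans (L_step k).
by rewrite -exprM ler_wpM2r // ler_eXnr ?muln_gt0 ?m_gt0.
Unshelve. all: by end_near.
Qed.
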